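(* Let $1\le m\le D$. For each $\mathbf a\in\{0,1\}^N$ define the function $f_{\mathbf a}:\Sigma_m\to\mathbb R$ by $$f_{\mathbf a}(S)=\frac{n_S(Z_{\mathbf a}=+1)-n_S(Z_{\mathbf a}=-1)}{m},$$ where $n_S(Z_{\mathbf a}=\pm1)$ is the number of $\mathbf z\in S$ with $(-1)^{\mathbf a\cdot\mathbf z}=\pm1$. Then $f_{\mathbf a}$ is an eigenfunction of the transition matrix of the local automaton Markov chain on $\Sigma_m$ with eigenvalue $1-\frac{|\mathbf a|}{2N}$, i.e. $$\frac{1}{|\mathcal G|}\sum_{u\in\mathcal G}f_{\mathbf a}(u(S))=\Big(1-\frac{|\mathbf a|}{2N}\Big)f_{\mathbf a}(S)\quad\text{for all }S\in\Sigma_m,$$ where $|\mathbf a|$ is the Hamming weight of $\mathbf a$.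
   Context: Consider $N\ge3$ qubits on a ring (site indices modulo $N$), bitstrings $\mathbf z\in\{0,1\}^N$, $D=2^N$, and $\mathbf a\cdot\mathbf z=\sum_i a_iz_i$. The gate set is $\mathcal G=\{u_{iab}: i\in\{1,\dots,N\},\ a,b\in\{0,1\}\}$ ($|\mathcal G|=4N$), where $u_{iab}$ is the permutation of $\{0,1\}^N$ that flips bit $i$ if and only if bit $i-1$ equals $a$ and bit $i+1$ equals $b$. $\Sigma_m$ is the set of subsets of $\{0,1\}^N$ of cardinality $m$, with $u(S)=\{u(\mathbf z):\mathbf z\in S\}$; the induced Markov chain has transition matrix $\Gamma_{S,S'}=\frac{1}{|\mathcal G|}\sum_{u\in\mathcal G}\delta_{S',u(S)}$, and $(\Gamma f)(S)=\sum_{S'}\Gamma_{S,S'}f(S')$. *)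

From HB Require Import structures.
From mathcomp Require Import all_boot all_order all_algebra.
Set Implicit Arguments. Unset Strict Implicit. Unset Printing Implicit Defensive.
Import Order.TTheory GRing.Theory Num.Theory.
Local Open Scope ring_scope.

(* Bitstrings z in {0,1}^N on a ring of N sites 'I_N (indices mod N). *)
Definition bitstring (N : nat) := {ffun 'I_N -> bool}.

Definition gate (N : nat) (i : 'I_N) (a b : bool) (z : bitstring N) : bitstring N :=
  if (z (ord_pred i) == a) && (z (ordS i) == b)
  then [ffun j => if j == i then ~~ z j else z j]
  else z.

Definition gate_set_image (N : nat) (i : 'I_N) (a b : bool)
  (S : {set bitstring N}) : {set bitstring N} := gate i a b @: S.

Definition dotb (N : nat) (a z : bitstring N) : nat := (\sum_(i < N) (a i && z i))%N.

Definition hweight (N : nat) (a : bitstring N) : nat := (\sum_(i < N) (a i : nat))%N.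

Definition nplus (N : nat) (a : bitstring N) (S : {set bitstring N}) : nat :=
  #|[set z in S | ~~ odd (dotb a z)]|.
Definition nminus (N : nat) (a : bitstring N) (S : {set bitstring N}) : nat :=
  #|[set z in S | odd (dotb a z)]|.

Definition f_a (R : realFieldType) (N m : nat) (a : bitstring N)
  (S : {set bitstring N}) : R :=
  ((nplus a S)%:R - (nminus a S)%:R) / m%:R.

(* (Gamma f)(S) = 1/|G| sum_{u in G} f(u(S)), G = {u_{iab}}, |G| = 4N *)
Definition Gamma (R : realFieldType) (N : nat)
  (f : {set bitstring N} -> R) (S : {set bitstring N}) : R :=
  (4 * N)%N%:R^-1 * \sum_(i < N) \sum_(a : bool) \sum_(b : bool)
      f (gate_set_image i a b S).

From HB Require Import structures.
From mathcomp Require Import all_boot all_order all_algebra.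
From mathcomp Require Import zify ring.
Set Implicit Arguments. Unset Strict Implicit. Unset Printing Implicit Defensive.
Import Order.TTheory GRing.Theory Num.Theory.
Local Open Scope ring_scope.

(* Write f_a(S) = (1/m) sum_{z in S} Z_a(z) with Z_a(z) = (-1)^(a.z).  For a
   fixed z and site i, exactly one of the four gates u_{i..} acts on z (the one
   whose control bits match z), and it flips bit i, multiplying Z_a(z) by
   (-1)^(a_i); the other three fix z.  Since gates are injective, summing over
   the gates of u(S) is summing over z in S, so the gate average multiplies
   sum_{z in S} Z_a(z) by (1/4N) sum_i (3 + (-1)^(a_i)) = 1 - |a|/2N. *)

Section CyclicNeighbours.
Variables (n : nat) (n_gt1 : (1 < n)%N).

Lemma ordS_neq (i : 'I_n) : ordS i != i.
Proof.
apply/eqP => /(congr1 val) /=; have := ltn_ord i.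
case: (ltnP i.+1 n) => [lt_in _|le_ni lt_in]; first by rewrite modn_small //; lia.
have -> : i.+1 = n by lia.
by rewrite modnn; lia.
Qed.

Lemma ord_pred_neq (i : 'I_n) : ord_pred i != i.
Proof.
apply/eqP => predE.
by have := ordS_neq (ord_pred i); rewrite ord_predK predE eqxx.
Qed.

End CyclicNeighbours.

Section Gates.
Variable N : nat.
Implicit Types (a z : bitstring N) (i : 'I_N) (x y : bool).

Definition flip i z : bitstring N := [ffun j => if j == i then ~~ z j else z j].

Lemma gateE i x y z :
  gate i x y z = if (z (ord_pred i) == x) && (z (ordS i) == y) then flip i z else z.
Proof. by []. Qed.

Lemma gateK i x y : (1 < N)%N -> involutive (gate i x y).
Proof.
move=> N_gt1 z; rewrite [gate i x y z]gateE.
case: ifP => [ctrl|ctrl]; last by rewrite gateE ctrl.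
rewrite gateE !ffunE (negbTE (ord_pred_neq N_gt1 i)) (negbTE (ordS_neq N_gt1 i)) ctrl.
by apply/ffunP => j; rewrite !ffunE; case: eqP => // ->; rewrite negbK.
Qed.

End Gates.

Section PauliZ.
Variables (R : comNzRingType) (N : nat).
Implicit Types (a z : bitstring N) (i : 'I_N) (S : {set bitstring N}).

Definition pauliZ a z : R := (-1) ^+ dotb a z.

Definition pauliZ_sum a S : R := \sum_(z in S) pauliZ a z.

Lemma pauliZE a z : pauliZ a z = \prod_(j < N) (-1) ^+ (a j && z j).
Proof. by rewrite /pauliZ /dotb prodrXr. Qed.

Lemma pauliZ_flip a i z : pauliZ a (flip i z) = (-1) ^+ a i * pauliZ a z.
Proof.
rewrite !pauliZE (bigD1 i) //= [in RHS](bigD1 i) //= mulrA; congr (_ * _).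
  by rewrite ffunE eqxx; case: (a i); case: (z i); rewrite /= ?mulN1r ?opprK ?mulr1.
by apply: eq_bigr => j /negbTE neq_ji; rewrite ffunE neq_ji.
Qed.

Lemma nplus_sub_nminus a S :
  (nplus a S)%:R - (nminus a S)%:R = pauliZ_sum a S.
Proof.
rewrite /pauliZ_sum (bigID (fun z => odd (dotb a z))) /= addrC /nplus /nminus.
rewrite -!sumr_const -sumrN; congr (_ + _); apply: eq_big => z; rewrite ?inE //.
  by case/andP => _ even_az; rewrite /pauliZ -signr_odd (negbTE even_az).
by case/andP => _ odd_az; rewrite /pauliZ -signr_odd odd_az.
Qed.

Lemma sum_pauliZ_gates a i z :
  \sum_(x : bool) \sum_(y : bool) pauliZ a (gate i x y z)
  = (3 + (-1) ^+ a i) * pauliZ a z.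
Proof.
rewrite !big_bool /= !gateE.
by case: (z (ord_pred i)); case: (z (ordS i)); rewrite /= ?pauliZ_flip; ring.
Qed.

Lemma pauliZ_sum_gate_image a i x y S : (1 < N)%N ->
  pauliZ_sum a (gate_set_image i x y S) = \sum_(z in S) pauliZ a (gate i x y z).
Proof.
move=> N_gt1; rewrite /pauliZ_sum /gate_set_image big_imset //.
exact: in2W (can_inj (gateK i x y N_gt1)).
Qed.

Lemma sum_sign_weights a :
  \sum_(i < N) (3 + (-1) ^+ a i : R) = (4 * N)%:R - (2 * hweight a)%:R.
Proof.
transitivity (\sum_(i < N) (4 - 2 * (a i)%:R : R)).
  by apply: eq_bigr => i _; case: (a i); rewrite /= ?expr1; ring.
by rewrite sumrB sumr_const card_ord -mulr_sumr -natr_sum !natrM !mulr_natr.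
Qed.

Lemma sum_gates_pauliZ_sum a S : (1 < N)%N ->
  \sum_(i < N) \sum_(x : bool) \sum_(y : bool) pauliZ_sum a (gate_set_image i x y S)
  = ((4 * N)%:R - (2 * hweight a)%:R) * pauliZ_sum a S.
Proof.
move=> N_gt1.
under eq_bigr => i _ do under eq_bigr => x _ do under eq_bigr => y _
  do rewrite pauliZ_sum_gate_image //.
rewrite -sum_sign_weights mulr_suml /pauliZ_sum.
under eq_bigr => i _ do under eq_bigr => x _ do rewrite exchange_big /=.
under eq_bigr => i _ do rewrite exchange_big /=.
by apply: eq_bigr => i _; rewrite mulr_sumr; apply: eq_bigr => z _; rewrite sum_pauliZ_gates.
Qed.

End PauliZ.

Theorem mainTheorem13 (R : realFieldType) (N m : nat) (a : bitstring N) :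
  (3 <= N)%N -> (1 <= m <= 2 ^ N)%N ->
  forall S : {set bitstring N}, #|S| = m ->
    Gamma (@f_a R N m a) S
    = (1 - (hweight a)%:R / (2 * N)%:R) * f_a R m a S.
Proof.
move=> N_ge3 _ S _; have N_gt1 : (1 < N)%N by lia.
rewrite /Gamma /f_a.
under eq_bigr => i _ do under eq_bigr => x _ do under eq_bigr => y _
  do rewrite nplus_sub_nminus.
under eq_bigr => i _ do under eq_bigr => x _ do rewrite -mulr_suml.
under eq_bigr => i _ do rewrite -mulr_suml.
rewrite -mulr_suml sum_gates_pauliZ_sum // nplus_sub_nminus !mulrA; congr (_ * _ * _).
rewrite !natrM.
have N_neq0 : (N%:R : R) != 0 by rewrite pnatr_eq0; lia.
by field; rewrite N_neq0.
Qed.
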